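(* Let $A$ be a ring, $M$ a left $A$-module, $W$ a multiplicative subset of $A$, $V$ a multiplicative submonoid of the center $Z(A)$ of $A$, and $S$ a subset of $M$. Then $G^{W,V}_M(S)$ is the smallest $V$-regular $W$-factroid of $M$ containing $S$.
   Context: Rings are unital, not necessarily commutative. A $W$-factroid of $M$ is an additive subgroup $F$ of $M$ such that for all $x\in M$ and $w\in W$, $wx\in F$ implies $x\in F$; for $X\subseteq M$, $[X]^W_M$ is the smallest $W$-factroid of $M$ containing $X$. For $h\in A$ and $X\subseteq M$, $hX=\{hx\mid x\in X\}$. For $T\subseteq A$, a $W$-factroid $F$ of $M$ is $T$-regular if for all $h\in T$ and $x\in M$, $hx\in[hF]^W_M$ implies $x\in F$. $G^{W,V}_M(S):=\{x\in M\mid hx\in[hS]^W_M \text{ for some } h\in V\}$. *)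

(* Rings: pzRingType (unital, not necessarily commutative,
   zero ring allowed); modules: lmodType A (left A-modules).
   Subsets are Prop-valued predicates. *)
From mathcomp Require Import all_boot all_order all_algebra.
Set Implicit Arguments. Unset Strict Implicit. Unset Printing Implicit Defensive.
Import GRing.Theory.
Local Open Scope ring_scope.

Section Factroids.
Variables (A : pzRingType) (M : lmodType A).

Definition additive_subgroup (F : M -> Prop) : Prop :=
  F 0 /\ (forall x y, F x -> F y -> F (x - y)).

Definition factroid (W : A -> Prop) (F : M -> Prop) : Prop :=
  additive_subgroup F /\ (forall (x : M) (w : A), W w -> F (w *: x) -> F x).

Definition factroid_closure (W : A -> Prop) (X : M -> Prop) : M -> Prop :=
  fun x => forall F : M -> Prop, factroid W F -> (forall y, X y -> F y) -> F x.

Definition smul_set (h : A) (X : M -> Prop) : M -> Prop :=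
  fun y => exists2 x, X x & y = h *: x.

Definition regular (W T : A -> Prop) (F : M -> Prop) : Prop :=
  factroid W F /\
  (forall (h : A) (x : M), T h ->
     factroid_closure W (smul_set h F) (h *: x) -> F x).

Definition Gset (W V : A -> Prop) (S : M -> Prop) : M -> Prop :=
  fun x => exists2 h, V h & factroid_closure W (smul_set h S) (h *: x).

End Factroids.

Definition multiplicative {A : pzRingType} (W : A -> Prop) : Prop :=
  W 1 /\ (forall a b, W a -> W b -> W (a * b)).

Definition central {A : pzRingType} (a : A) : Prop := forall b : A, a * b = b * a.

Definition central_submonoid {A : pzRingType} (V : A -> Prop) : Prop :=
  (forall a, V a -> central a) /\ V 1 /\ (forall a b, V a -> V b -> V (a * b)).

(* For k in V write G_k(S) := { x | k x \in [kS] }, so that G^{W,V}(S) is the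
   union of the G_k(S).  Centrality of V gives k [X] \subseteq [kX], hence
   G_k(S) \subseteq G_{jk}(S) for j in V; the union is therefore directed and
   is a W-factroid.  For regularity, h G(S) \subseteq G(hS) because h commutes
   with every k, so h x \in [h G(S)] puts x in G_{kh}(S) for some k in V.
   Minimality is immediate: a V-regular F containing S contains every x with
   h x \in [hS] \subseteq [hF]. *)
From Pilot Require Import Defs.
From mathcomp Require Import all_boot all_order all_algebra.

Set Implicit Arguments. Unset Strict Implicit.
Import GRing.Theory.
(* GRing.Theory exports a deprecated [multiplicative]; Defs' one must win. *)
Import Defs.
Local Open Scope ring_scope.

Section FactroidClosure.
Variables (A : pzRingType) (M : lmodType A) (W : A -> Prop).

Lemma factroid_closure_factroid (X : M -> Prop) :
  factroid W (factroid_closure W X).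
Proof.
split; [split|].
- by move=> F [[F0 _] _].
- move=> x y Xx Xy F FF XF; apply: FF.1.2; [exact: Xx | exact: Xy].
- by move=> x w Ww Xwx F FF XF; apply: (FF.2 x w Ww); apply: Xwx.
Qed.

Lemma factroid_closure_sub (X : M -> Prop) x : X x -> factroid_closure W X x.
Proof. by move=> Xx F _; apply. Qed.

Lemma factroid_closure_min (X F : M -> Prop) :
  factroid W F -> (forall x, X x -> F x) ->
  forall x, factroid_closure W X x -> F x.
Proof. by move=> FF XF x; apply. Qed.

Lemma factroid_closure_mono (X Y : M -> Prop) :
  (forall x, X x -> Y x) ->
  forall x, factroid_closure W X x -> factroid_closure W Y x.
Proof.
move=> XY; apply: factroid_closure_min; first exact: factroid_closure_factroid.
by move=> x /XY; apply: factroid_closure_sub.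
Qed.

Lemma smul_set_comp (h k : A) (X : M -> Prop) x :
  smul_set h (smul_set k X) x <-> smul_set (h * k) X x.
Proof.
split=> [[_ [y Xy ->] ->] | [y Xy ->]]; first by exists y; rewrite // scalerA.
by exists (k *: y); [exists y | rewrite scalerA].
Qed.

Lemma factroid_closure_scale (h : A) (X : M -> Prop) x : central h ->
  factroid_closure W X x -> factroid_closure W (smul_set h X) (h *: x).
Proof.
move=> ch; apply: (factroid_closure_min (F := fun z => _ (h *: z))).
  have [[C0 CB] Cw] := factroid_closure_factroid (smul_set h X).
  split; [split|].
  - by rewrite scaler0.
  - by move=> y z Cy Cz; rewrite scalerBr; apply: CB.
  - by move=> y w Ww; rewrite scalerA ch -scalerA; apply: Cw.
by move=> y Xy; apply: factroid_closure_sub; exists y.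
Qed.

Lemma factroid_closure_smul_mul (h k : A) (X : M -> Prop) x : central h ->
  factroid_closure W (smul_set k X) (k *: x) ->
  factroid_closure W (smul_set (h * k) X) ((h * k) *: x).
Proof.
move=> ch /(factroid_closure_scale ch); rewrite scalerA.
by apply: factroid_closure_mono => y /smul_set_comp.
Qed.

End FactroidClosure.

Section Gset.
Variables (A : pzRingType) (M : lmodType A) (W V : A -> Prop).
Hypothesis V_central_submonoid : central_submonoid V.

Let V_central : forall k, V k -> central k.
Proof. by case: V_central_submonoid. Qed.
Let V1 : V 1. Proof. by case: V_central_submonoid => _ []. Qed.
Let VM : forall j k, V j -> V k -> V (j * k).
Proof. by case: V_central_submonoid => _ []. Qed.

Lemma Gset_sub (S : M -> Prop) x : S x -> Gset W V S x.
Proof. by move=> Sx; exists 1 => //; apply: factroid_closure_sub; exists x. Qed.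

Lemma Gset_factroid (S : M -> Prop) : factroid W (Gset W V S).
Proof.
split; [split|].
- exists 1 => //; rewrite scaler0.
  by case: (factroid_closure_factroid W (smul_set 1 S)) => [[]].
- move=> x y [j Vj Sx] [k Vk Sy]; exists (j * k); first exact: VM.
  have [[_ CB] _] := factroid_closure_factroid W (smul_set (j * k) S).
  rewrite scalerBr; apply: CB.
  + by rewrite -(V_central Vk); apply: factroid_closure_smul_mul (V_central Vk) Sx.
  + exact: factroid_closure_smul_mul (V_central Vj) Sy.
- move=> x w Ww [k Vk Swx]; exists k => //.
  have [_ Cw] := factroid_closure_factroid W (smul_set k S).
  by apply: (Cw _ w Ww); rewrite scalerA -(V_central Vk) -scalerA.
Qed.

Lemma smul_Gset_sub (h : A) (S : M -> Prop) : V h ->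
  forall x, smul_set h (Gset W V S) x -> Gset W V (smul_set h S) x.
Proof.
move=> Vh _ [x [k Vk Sx] ->]; exists k => //.
have := factroid_closure_smul_mul (V_central Vh) Sx.
rewrite (V_central Vh) -scalerA.
by apply: factroid_closure_mono => y /smul_set_comp.
Qed.

Lemma Gset_smul_set (h : A) (S : M -> Prop) x : V h ->
  Gset W V (smul_set h S) (h *: x) -> Gset W V S x.
Proof.
move=> Vh [k Vk Sx]; exists (k * h); first exact: VM.
rewrite -scalerA; move: Sx.
by apply: factroid_closure_mono => y /smul_set_comp.
Qed.

Lemma Gset_regular (S : M -> Prop) : regular W V (Gset W V S).
Proof.
split=> [|h x Vh]; first exact: Gset_factroid.
move=> /(factroid_closure_min (Gset_factroid _) (smul_Gset_sub Vh)).
exact: Gset_smul_set.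
Qed.

End Gset.

Lemma regular_Gset_min (A : pzRingType) (M : lmodType A) (W V : A -> Prop)
    (S F : M -> Prop) :
  regular W V F -> (forall x, S x -> F x) -> forall x, Gset W V S x -> F x.
Proof.
move=> [_ F_reg] SF x [h Vh Sx]; apply: (F_reg h x Vh).
by move: Sx; apply: factroid_closure_mono => _ [y /SF Fy ->]; exists y.
Qed.

Theorem proposition6p13 (A : pzRingType) (M : lmodType A)
  (W V : A -> Prop) (S : M -> Prop) :
  multiplicative W -> central_submonoid V ->
  [/\ regular W V (Gset W V S),
      (forall x, S x -> Gset W V S x) &
      (forall F : M -> Prop, regular W V F -> (forall x, S x -> F x) ->
         forall x, Gset W V S x -> F x)].
Proof.
move=> _ V_central_submonoid; split.
- exact: Gset_regular.
- exact: Gset_sub.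
- by move=> F; apply: regular_Gset_min.
Qed.
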